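(* Let $p$ be a prime and $1\le r\leq s$ integers, and let $\varepsilon(r,s,p)=(\varepsilon_1,\dots,\varepsilon_r)$. Then $|\varepsilon_i|\leq r-1$ for $1\leq i\leq r$.
   Context: For a positive integer $n$, let $J_n$ denote the $n\times n$ matrix with $1$s in positions $(i,i)$ for $1\le i\le n$ and $(i,i+1)$ for $1\le i<n$, and $0$s elsewhere. For $1\le r\le s$, the Jordan canonical form of $J_r\otimes J_s$ over a field of characteristic $p$ is $J_{\lambda_1}\oplus\cdots\oplus J_{\lambda_r}$ with $\lambda_1\ge\cdots\ge\lambda_r>0$; write $\lambda(r,s,p)=(\lambda_1,\dots,\lambda_r)$. The deviation vector is $\varepsilon(r,s,p)=(\lambda_1-s,\dots,\lambda_r-s)$. *)

From HB Require Import structures.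
From mathcomp Require Import all_boot all_order all_algebra.
From mathcomp Require Export mxtens.
Set Implicit Arguments. Unset Strict Implicit. Unset Printing Implicit Defensive.
Import Order.TTheory GRing.Theory Num.Theory.
Local Open Scope ring_scope.

Definition jordan1 (F : fieldType) (n : nat) : 'M[F]_n :=
  \matrix_(i < n, j < n) (((i : nat) == j) || ((j : nat) == i.+1))%:R.

(* Similarity is
   expressed with mutually inverse P, Q (this forces \sum lam = r*s). *)
Definition is_jcf_tens (F : fieldType) (r s : nat) (lam : 'I_r -> nat) : Prop :=
  (forall i j : 'I_r, (i <= j)%N -> (lam j <= lam i)%N) /\
  (forall i : 'I_r, (0 < lam i)%N) /\
  exists (P : 'M[F]_(r * s, \sum_(i < r) lam i))
         (Q : 'M[F]_(\sum_(i < r) lam i, r * s)),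
    P *m Q = 1%:M /\ Q *m P = 1%:M /\
    Q *m (jordan1 F r *t jordan1 F s) *m P = \mxdiag_(i < r) jordan1 F (lam i).

From mathcomp Require Import all_boot all_order all_algebra.
From mathcomp Require Import zify ring.
Set Implicit Arguments. Unset Strict Implicit. Unset Printing Implicit Defensive.
Import Order.TTheory GRing.Theory Num.Theory.
Local Open Scope ring_scope.

(* Write [J_n = 1 + S_n] with [S_n] the nilpotent shift.  Then
   [J_r (x) J_s - 1 = N := X + Y + X Y] with [X = S_r (x) 1] and [Y = 1 (x) S_s]
   commuting, [X^r = Y^s = 0], and the [lam_i] are the Jordan block sizes of the
   nilpotent matrix [N].
   Upper bound: [N = X + Y (1 + X)] and [Y (1 + X)] is nilpotent of index [s],
   so [N^(r+s-1) = 0].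
   Lower bound: every row vector killed by [N] lies in the row space of
   [N^(s-r)]: its coordinates vanish on the antidiagonals [k + l < s - 1], and each
   basis vector [e_(a,b)] with [a + b >= s - 1] is [e_(0,b') X^a Y^(s-1-a)], a
   multiple of [N^(s-r)].  A Jordan block of size at most [s - r] would contain
   a kernel vector outside this row space. *)

Lemma exprn_eq0_ge {R : pzRingType} {x : R} {n m : nat} :
  x ^+ n = 0 -> (n <= m)%N -> x ^+ m = 0.
Proof. by move=> xn0 nm; rewrite -(subnKC nm) exprD xn0 mul0r. Qed.

Section CommutingNilpotent.
Variables (R : pzRingType) (X Y : R) (r : nat).
Hypotheses (cXY : GRing.comm X Y) (Xr : X ^+ r = 0).

Lemma comm_nil_expD_eq0 s : Y ^+ s = 0 -> (X + Y + X * Y) ^+ (r + s - 1) = 0.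
Proof.
move=> Ys; pose U := Y * (1 + X).
have -> : X + Y + X * Y = X + U by rewrite /U mulrDr mulr1 cXY addrA.
have cY1X : GRing.comm Y (1 + X).
  by rewrite /GRing.comm mulrDl mulrDr mul1r mulr1 cXY.
have Us : U ^+ s = 0 by rewrite exprMn_comm // Ys mul0r.
have cXU : GRing.comm X U.
  rewrite /GRing.comm /U mulrA cXY -!mulrA; congr (_ * _).
  by rewrite mulrDr mulrDl mul1r mulr1.
rewrite exprDn_comm // big1 // => i _.
have [si|i_lt_s] := leqP s i; first by rewrite (exprn_eq0_ge Us si) mulr0 mul0rn.
by rewrite (@exprn_eq0_ge _ _ r) ?mul0r ?mul0rn //; lia.
Qed.

(* Expand [Y = N - X - X Y], then induct on [c] and downwards on [b]
   (monomials with [r <= b] vanish). *)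
Lemma comm_nil_monomial_lfactor b c :
  exists K, X ^+ b * Y ^+ c = K * (X + Y + X * Y) ^+ (b + c + 1 - r).
Proof.
set N := X + Y + X * Y.
pose lmul n z := exists K, z = K * N ^+ n.
have lmul0 n : lmul n 0 by exists 0; rewrite mul0r.
have lmul_le n m z : lmul m z -> (n <= m)%N -> lmul n z.
  by move=> [K ->] nm; exists (K * N ^+ (m - n)); rewrite -mulrA -exprD subnK.
have lmulB n z1 z2 : lmul n z1 -> lmul n z2 -> lmul n (z1 - z2).
  by move=> [K1 ->] [K2 ->]; exists (K1 - K2); rewrite mulrBl.
have lmulMN n z : lmul n z -> lmul n.+1 (z * N).
  by move=> [K ->]; exists K; rewrite -mulrA -exprSr.
have vanish b' c' : (r <= b')%N -> X ^+ b' * Y ^+ c' = 0.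
  by move=> rb; rewrite (exprn_eq0_ge Xr rb) mul0r.
have YS c' : Y ^+ c'.+1 = Y ^+ c' * N - X * Y ^+ c' - X * Y ^+ c'.+1.
  rewrite /N !mulrDr mulrA -(commrX c' cXY) -mulrA -exprSr.
  by rewrite addrAC addrK [X * _ + _]addrC addrK.
elim: c b => [|c IHc] b.
  have [rb|br] := leqP r b; first by rewrite vanish //; exact: (lmul0).
  by exists (X ^+ b); rewrite (_ : (b + 0 + 1 - r)%N = 0%N) ?mulr1 //; lia.
have [k] : exists k, (r - b <= k)%N by exists (r - b)%N.
elim: k b => [|k IHk] b bk; have [rb|br] := leqP r b;
  try by rewrite vanish //; exact: (lmul0).
- by lia.
rewrite YS !mulrBr !mulrA -exprSr; apply: (lmulB); [apply: (lmulB)|].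
- by apply: lmul_le (lmulMN _ _ (IHc b)) _; lia.
- by apply: lmul_le (IHc b.+1) _; lia.
- by apply: lmul_le (IHk b.+1 _) _; lia.
Qed.

End CommutingNilpotent.

Lemma sum_ord_eq_natr (R : pzRingType) n (G : 'I_n -> R) k c :
  (forall l : 'I_n, (l : nat) = k -> G l = c) ->
  \sum_(l < n) ((l : nat) == k)%:R * G l = (k < n)%:R * c.
Proof.
move=> Gk; have [kn|nk] := ltnP k n.
  rewrite (bigD1 (Ordinal kn)) //= eqxx mul1r Gk // big1 ?addr0 ?mul1r // => l.
  by rewrite -val_eqE /= => /negbTE->; rewrite mul0r.
rewrite mul0r big1 // => l _.
by rewrite (_ : (l : nat) == k = false) ?mul0r //; move: (ltn_ord l); lia.
Qed.

Section ShiftMatrix.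
Variable F : fieldType.

Definition shift_mx n : 'M[F]_n := \matrix_(i, j) ((j : nat) == i.+1)%:R.

Definition erow n k : 'rV[F]_n := \row_j ((j : nat) == k)%:R.

Lemma jordan1E n : jordan1 F n = 1%:M + shift_mx n.
Proof.
apply/matrixP => i j; rewrite !mxE -val_eqE /=.
have [->|ij] := eqVneq (i : nat) j; last by rewrite /= mulr0n add0r.
by rewrite (_ : (j : nat) == j.+1 = false) ?addr0 //; lia.
Qed.

Lemma shift_mx_expE n k :
  shift_mx n ^+ k = \matrix_(i, j) ((j : nat) == (i + k)%N)%:R.
Proof.
elim: k => [|k IHk]; first by apply/matrixP => i j; rewrite !mxE addn0 eq_sym.
apply/matrixP => i j; rewrite exprSr IHk !mxE.
under eq_bigr => l _ do rewrite !mxE.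
rewrite (@sum_ord_eq_natr _ _ (fun l => ((j : nat) == l.+1)%:R) _
                          ((j : nat) == (i + k).+1)%:R); last by move=> l ->.
have [|ikn] := ltnP (i + k) n; first by rewrite mul1r addnS.
by rewrite mul0r addnS (_ : (j : nat) == (i + k).+1 = false) //; move: (ltn_ord j); lia.
Qed.

Lemma shift_mx_exp_eq0 n k : (n <= k)%N -> shift_mx n ^+ k = 0.
Proof.
move=> nk; apply/matrixP => i j; rewrite shift_mx_expE !mxE.
by rewrite (_ : (j : nat) == (i + k)%N = false) //; move: (ltn_ord j); lia.
Qed.

Lemma erow_mul_shift_exp n k m : erow n k *m shift_mx n ^+ m = erow n (k + m).
Proof.
apply/matrixP => i j; rewrite shift_mx_expE !mxE.
under eq_bigr => l _ do rewrite !mxE.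
rewrite (@sum_ord_eq_natr _ _ (fun l => ((j : nat) == (l + m)%N)%:R) _
                          ((j : nat) == (k + m)%N)%:R); last by move=> l ->.
have [|nk] := ltnP k n; first by rewrite mul1r.
by rewrite mul0r (_ : (j : nat) == (k + m)%N = false) //; move: (ltn_ord j); lia.
Qed.

Lemma erow_eq0 n k : (erow n k == 0) = (n <= k)%N.
Proof.
apply/eqP/idP => [/matrixP e0|nk]; last first.
  apply/matrixP => i j; rewrite !mxE.
  by rewrite (_ : (j : nat) == k = false) //; move: (ltn_ord j); lia.
rewrite leqNgt; apply/negP => kn.
by move: (e0 0 (Ordinal kn)); rewrite !mxE eqxx => /eqP; rewrite oner_eq0.
Qed.

End ShiftMatrix.

Lemma mxtens_index_eq m n (i k : 'I_m) (j l : 'I_n) :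
  (mxtens_index (i, j) == mxtens_index (k, l)) = (i == k) && (j == l).
Proof. by rewrite (can_eq (@mxtens_indexK m n)) xpair_eqE. Qed.

Section Tensor.
Variable R : comPzRingType.

Lemma tensmx1 m n : (1%:M : 'M[R]_m) *t (1%:M : 'M[R]_n) = 1%:M.
Proof.
apply/matrixP => x y.
case: (mxtens_indexP x) => i j; case: (mxtens_indexP y) => k l.
rewrite tensmxE !mxE mxtens_index_eq.
by case: (i == k); case: (j == l); rewrite /= ?mulr1 ?mulr0 ?mul0r.
Qed.

Lemma tensmx_exp m n (A : 'M[R]_m) (B : 'M[R]_n) k :
  (A *t B) ^+ k = A ^+ k *t B ^+ k.
Proof.
elim: k => [|k IHk]; first by rewrite !expr0 -!idmxE tensmx1.
by rewrite !exprSr IHk -!mulmxE tensmx_mul.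
Qed.

Lemma mul_tensmx_entry m n p q (v : 'rV[R]_(m * n)) (A : 'M_(m, p)) (B : 'M_(n, q))
    k l :
  (v *m (A *t B)) 0 (mxtens_index (k, l)) =
  \sum_(i < m) \sum_(j < n) v 0 (mxtens_index (i, j)) * (A i k * B j l).
Proof.
rewrite mxE pair_big /= (reindex (@mxtens_index m n)) /=; last first.
  by exists (@mxtens_unindex m n) => x _; [apply: mxtens_indexK | apply: mxtens_unindexK].
by apply: eq_bigr => -[i j] _; rewrite tensmxE.
Qed.

End Tensor.

Section TensorNilpotent.
Variables (F : fieldType) (r s : nat).

Definition shift_tensl : 'M[F]_(r * s) := shift_mx F r *t 1%:M.
Definition shift_tensr : 'M[F]_(r * s) := 1%:M *t shift_mx F s.
Definition tens_nil : 'M[F]_(r * s) :=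
  shift_tensl + shift_tensr + shift_tensl * shift_tensr.

Lemma shift_tens_monomial b c :
  shift_tensl ^+ b * shift_tensr ^+ c = shift_mx F r ^+ b *t shift_mx F s ^+ c.
Proof.
by rewrite !tensmx_exp !idmxE !expr1n -!idmxE -mulmxE tensmx_mul mulmx1 mul1mx.
Qed.

Lemma shift_tens_comm : GRing.comm shift_tensl shift_tensr.
Proof.
rewrite /GRing.comm; have := shift_tens_monomial 1 1; rewrite !expr1 => ->.
by rewrite -mulmxE tensmx_mul mulmx1 mul1mx.
Qed.

Lemma shift_tensl_exp_eq0 : shift_tensl ^+ r = 0.
Proof. by rewrite tensmx_exp shift_mx_exp_eq0 // tens0mx. Qed.

Lemma shift_tensr_exp_eq0 : shift_tensr ^+ s = 0.
Proof. by rewrite tensmx_exp shift_mx_exp_eq0 // tensmx0. Qed.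

Lemma tens_nil_exp_eq0 : tens_nil ^+ (r + s - 1) = 0.
Proof.
exact: (comm_nil_expD_eq0 shift_tens_comm shift_tensl_exp_eq0 shift_tensr_exp_eq0).
Qed.

Lemma tens_jordan1_sub1 : jordan1 F r *t jordan1 F s - 1%:M = tens_nil.
Proof.
have XY := shift_tens_monomial 1 1; rewrite !expr1 in XY.
rewrite /tens_nil XY /shift_tensl /shift_tensr !jordan1E.
apply/matrixP => x y.
case: (mxtens_indexP x) => i j; case: (mxtens_indexP y) => k l.
rewrite !mxE !mxtens_indexK /= mxtens_index_eq.
by case: (i == k); case: (j == l); rewrite /= ?mulr1n ?mulr0n; ring.
Qed.

(* [tens_coef v k l] is the coordinate of [v] at index [(k, l)], extended by [0] to
   indices [(k, l)] outside [[0, r) x [0, s)]. *)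
Definition tens_coef (v : 'rV[F]_(r * s)) (k l : nat) : F :=
  \sum_(i < r) ((i : nat) == k)%:R *
    \sum_(j < s) ((j : nat) == l)%:R * v 0 (mxtens_index (i, j)).

Lemma tens_coefE v (i : 'I_r) (j : 'I_s) :
  tens_coef v i j = v 0 (mxtens_index (i, j)).
Proof.
set c := v 0 _; rewrite /tens_coef (@sum_ord_eq_natr _ _ _ _ c) ?ltn_ord ?mul1r //.
move=> i' /val_inj ->.
by rewrite (@sum_ord_eq_natr _ _ _ _ c) ?ltn_ord ?mul1r // => j' /val_inj ->.
Qed.

Lemma tens_coef_outl v k l : (r <= k)%N -> tens_coef v k l = 0.
Proof.
move=> rk; rewrite /tens_coef (@sum_ord_eq_natr _ _ _ _ 0) ?mulr0 //.
by move=> i ik; move: (ltn_ord i); rewrite ik; lia.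
Qed.

Lemma tens_coef_mul_tens_nil v (k : 'I_r) (l : 'I_s) :
  (v *m tens_nil) 0 (mxtens_index (k, l)) =
  (0 < k)%:R * tens_coef v k.-1 l + (0 < l)%:R * tens_coef v k l.-1
  + (0 < k)%:R * ((0 < l)%:R * tens_coef v k.-1 l.-1).
Proof.
have XY := shift_tens_monomial 1 1; rewrite !expr1 in XY.
have eqS n (x : 'I_n) (y : nat) : ((y == x.+1) = (0 < y)%N && ((x : nat) == y.-1)).
  by case: y => [|y] //=; rewrite eqSS eq_sym.
have addE (A B : 'rV[F]_(r * s)) x : (A + B) 0 x = A 0 x + B 0 x by rewrite mxE.
rewrite /tens_nil XY !mulmxDr !addE !mul_tensmx_entry /tens_coef !mulr_sumr.
congr (_ + _ + _); apply: eq_bigr => i _; rewrite !mulr_sumr; apply: eq_bigr => j _;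
  by rewrite !mxE ?eqS -?val_eqE /= -?mulnb ?natrM; ring.
Qed.

(* Solve [(v N)(k, l+1) = 0] for [v(k, l)] and sweep the antidiagonals [k + l = d]. *)
Lemma tens_nil_ker_coef_eq0 v k l :
  v *m tens_nil = 0 -> ((k + l).+1 < s)%N -> tens_coef v k l = 0.
Proof.
move=> vN0; have step k' l' : (k' < r)%N -> (l'.+1 < s)%N ->
    tens_coef v k' l' =
      - ((0 < k')%:R * (tens_coef v k'.-1 l'.+1 + tens_coef v k'.-1 l')).
  move=> k'r l's; have := tens_coef_mul_tens_nil v (Ordinal k'r) (Ordinal l's).
  by rewrite vN0 mxE /= => E; rewrite -[RHS]addr0 E; ring.
have col0 l' : (l'.+1 < s)%N -> tens_coef v 0 l' = 0.
  move=> l's; have [r_gt0|] := ltnP 0 r; last exact: tens_coef_outl.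
  by rewrite step //= mul0r oppr0.
suff diag d : (d.+1 < s)%N -> forall k', (k' <= d)%N -> tens_coef v k' (d - k') = 0.
  by move=> kls; have := diag _ kls k (leq_addr _ _); rewrite addKn.
elim: d => [|d IHd] ds; elim=> [|k' IHk'] k'd; rewrite ?subn0 ?col0 //.
have [k'r|] := ltnP k'.+1 r; last exact: tens_coef_outl.
rewrite subSS step //= -?subSn; try lia.
by rewrite IHk' ?IHd ?mul1r ?addr0 ?oppr0 //; lia.
Qed.

(* [e_(a,b) = e_(0,b-c) X^a Y^c] with [c = s - 1 - a], and [a + c + 1 - r = s - r]. *)
Lemma delta_tens_sub_exp (a : 'I_r) (b : 'I_s) : (r <= s)%N -> (s <= (a + b).+1)%N ->
  ((delta_mx 0 (mxtens_index (a, b)) : 'rV[F]_(r * s)) <= tens_nil ^+ (s - r))%MS.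
Proof.
move=> rs sab; pose c := (s.-1 - a)%N.
have [K XaYc] := comm_nil_monomial_lfactor shift_tens_comm shift_tensl_exp_eq0 a c.
rewrite (_ : (a + c + 1 - r)%N = (s - r)%N) in XaYc; last first.
  by move: (ltn_ord a) (ltn_ord b); rewrite /c; lia.
have b's : (b - c < s)%N by move: (ltn_ord b); lia.
have r0 : (0 < r)%N by move: (ltn_ord a); lia.
have -> : (delta_mx 0 (mxtens_index (a, b)) : 'rV[F]_(r * s)) =
    delta_mx 0 (mxtens_index (Ordinal r0, Ordinal b's)) *m
      (shift_tensl ^+ a * shift_tensr ^+ c).
  rewrite shift_tens_monomial -rowE; apply/matrixP => x y; rewrite [x]ord1.
  case: (mxtens_indexP y) => k l.
  rewrite [in RHS]mxE tensmxE !shift_mx_expE !mxE mxtens_index_eq /= add0n.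
  rewrite subnK; last first.
    by move: (ltn_ord a) (ltn_ord b); rewrite /c; lia.
  by rewrite -mulnb natrM.
by rewrite XaYc -mulmxE mulmxA submxMl.
Qed.

Lemma kermx_tens_nil_sub_exp : (r <= s)%N ->
  (kermx tens_nil <= tens_nil ^+ (s - r))%MS.
Proof.
move=> rs; apply/row_subP => i0; set v := row i0 _.
have vN0 : v *m tens_nil = 0 by rewrite -row_mul mulmx_ker row0.
rewrite [v]matrix_sum_delta; apply: summx_sub => i _; apply: summx_sub => y _.
rewrite [i]ord1; case: (mxtens_indexP y) => a b.
have [sab|abs] := leqP s (a + b).+1; first by apply/scalemx_sub/delta_tens_sub_exp.
by rewrite -tens_coefE tens_nil_ker_coef_eq0 // scale0r sub0mx.
Qed.

End TensorNilpotent.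

Section Conjugation.
Variable F : fieldType.
Variables (m n : nat) (P : 'M[F]_(m, n)) (Q : 'M[F]_(n, m)).
Hypotheses (PQ : P *m Q = 1%:M) (QP : Q *m P = 1%:M).

Lemma conj_mx_exp (A : 'M[F]_m) k : (Q *m A *m P) ^+ k = Q *m A ^+ k *m P.
Proof.
elim: k => [|k IHk]; first by rewrite !expr0 -!idmxE mulmx1.
by rewrite exprSr IHk [A ^+ k.+1]exprSr -!mulmxE -!mulmxA (mulmxA P Q) PQ mul1mx !mulmxA.
Qed.

Lemma kermx_conj_sub_exp (A : 'M[F]_m) e : (kermx A <= A ^+ e)%MS ->
  (kermx (Q *m A *m P) <= (Q *m A *m P) ^+ e)%MS.
Proof.
move=> kerA; set B := kermx _.
have BQ_ker : (B *m Q <= kermx A)%MS.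
  apply/sub_kermxP.
  have -> : B *m Q *m A = B *m (Q *m A *m P) *m Q.
    by rewrite !mulmxA -(mulmxA _ P Q) PQ mulmx1.
  by rewrite mulmx_ker mul0mx.
have [U BQ] := submxP (submx_trans BQ_ker kerA).
have -> : B = U *m P *m (Q *m A ^+ e *m P).
  by rewrite !mulmxA -(mulmxA U P Q) PQ mulmx1 -BQ -mulmxA QP mulmx1.
by rewrite conj_mx_exp submxMl.
Qed.

End Conjugation.

Section BlockDiagonal.
Variable F : fieldType.
Variables (p : nat) (lam : 'I_p -> nat).

Lemma submxrow_mul_mxdiag_exp m (B_ : forall j, 'M[F]_(lam j))
    (u : 'M[F]_(m, \sum_j lam j)) i k :
  submxrow (u *m (\mxdiag_j B_ j) ^+ k) i = submxrow u i *m B_ i ^+ k.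
Proof.
elim: k u => [|k IHk] u; first by rewrite !expr0 -!idmxE !mulmx1.
rewrite exprS mulmxA IHk -{1}(submxrowK u) mul_mxrow_mxdiag mxrowK.
by rewrite exprS mulmxA.
Qed.

Lemma mxdiag_jordan1_sub1 :
  \mxdiag_j jordan1 F (lam j) - 1%:M = \mxdiag_j shift_mx F (lam j).
Proof.
rewrite -(@mxdiagZ F _ lam 1) -mxdiagB; apply: eq_mxdiag => j.
by rewrite jordan1E addrC addKr.
Qed.

Let D := \mxdiag_j shift_mx F (lam j).

Definition block_erow (i : 'I_p) k : 'rV[F]_(\sum_j lam j) :=
  \mxrow_j (if j == i then erow F (lam j) k else 0).

Lemma mxdiag_shift_exp_eq0 i e : D ^+ e = 0 -> (lam i <= e)%N.
Proof.
move=> De0; rewrite -(erow_eq0 F).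
have := submxrow_mul_mxdiag_exp (fun j => shift_mx F (lam j)) (block_erow i 0) i e.
by rewrite De0 mulmx0 submxrow0 mxrowK eqxx erow_mul_shift_exp => <-.
Qed.

Lemma mxdiag_shift_kermx_sub_exp i e :
  (kermx D <= D ^+ e)%MS -> (0 < lam i)%N -> (e < lam i)%N.
Proof.
move=> kerD lam_gt0; rewrite ltnNge; apply/negP => lam_le_e.
set u := block_erow i (lam i).-1.
have uD0 : u *m D = 0.
  rewrite -[u *m D]submxrowK -(mxrow0 1); apply/eq_mxrow => j.
  rewrite -[D]expr1 submxrow_mul_mxdiag_exp /u mxrowK.
  case: eqP => [->|_]; last by rewrite mul0mx.
  by rewrite erow_mul_shift_exp; apply/eqP; rewrite erow_eq0; lia.
have [w uw] := submxP (submx_trans (introT sub_kermxP uD0) kerD).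
have := congr1 (fun A => submxrow A i) uw.
rewrite /= submxrow_mul_mxdiag_exp shift_mx_exp_eq0 // mulmx0 /u mxrowK eqxx.
by move/eqP; rewrite erow_eq0; lia.
Qed.

End BlockDiagonal.

Theorem lemma12 (p : nat) (F : fieldType) (r s : nat) (lam : 'I_r -> nat) :
  prime p -> p \in [pchar F] -> (1 <= r)%N -> (r <= s)%N ->
  @is_jcf_tens F r s lam ->
  forall i : 'I_r, `|(lam i)%:Z - s%:Z| <= (r - 1)%:Z.
Proof.
move=> _ _ _ rs [_ [lam_gt0 [P [Q [PQ [QP JCF]]]]]] i.
have nilJCF : Q *m tens_nil F r s *m P = \mxdiag_j shift_mx F (lam j).
  by rewrite -tens_jordan1_sub1 mulmxBr mulmxBl JCF mulmx1 QP mxdiag_jordan1_sub1.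
have ub : (lam i <= r + s - 1)%N.
  apply: (@mxdiag_shift_exp_eq0 F).
  by rewrite -nilJCF conj_mx_exp // tens_nil_exp_eq0 mulmx0 mul0mx.
have lb : (s - r < lam i)%N.
  apply: (@mxdiag_shift_kermx_sub_exp F) (lam_gt0 i).
  by rewrite -nilJCF kermx_conj_sub_exp // kermx_tens_nil_sub_exp.
by rewrite ler_norml; apply/andP; split; lia.
Qed.
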